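(* Let $\omega=SSw$ be an attack cycle starting with two letters S, where $w=w_1\cdots w_\nu$ with $w_\nu=H$, and let $X_0=0$, $X_i=X_{i-1}+1$ if $w_i=S$, $X_i=X_{i-1}-1$ if $w_i=H$. Let $H(\omega)$ be the number of indices $1\le i\le\nu$ with $X_i<n_1-2$ and $X_i<X_{i-1}$. Then $$\mathbb{E}[H(\omega)\mid \omega=SS\ldots]=\frac{p}{p-q}\Bigl(1-\Bigl(\frac qp\Bigr)^{n_1-1}\Bigr).$$
   Context: Honest hashrate $p$, attacker hashrate $q$, $p+q=1$, $0<q<p$; $n_1\ge 2$ is an integer (the maximal uncle–nephew distance in Ethereum). Attack cycles starting with SS are the words $SSw'H$ with $w'$ a Dyck word over $\{S,H\}$, with $\mathbb{P}[SSw'H]=q^2p(pq)^{|w'|}$ ($|w'|$ half the length of $w'$); equivalently, conditional on starting with SS, the path $(X_i)$ is a random walk from $0$ with up-steps of probability $q$ and down-steps of probability $p$, stopped at its first visit to $-1$ (at time $\nu$). *)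

From HB Require Import structures.
From mathcomp Require Import all_boot all_order all_algebra.
From mathcomp Require Import all_classical all_reals all_analysis.
Set Implicit Arguments. Unset Strict Implicit. Unset Printing Implicit Defensive.
Import Order.TTheory GRing.Theory Num.Theory.
Local Open Scope ring_scope.

(* A word w = w_1 ... w_nu over {S,H} is a seq bool: true = S, false = H.
   nth false w (i-1) is the letter w_i. *)

Definition Xpos (w : seq bool) (i : nat) : int :=
  \sum_(j < i) (if nth false w j then 1 else -1).

(* w is the part after the initial SS of an attack cycle: the walk from 0
   stays >= 0 before the end and first hits -1 at time nu = size w. *)
Definition first_passage (w : seq bool) : bool :=
  all (fun i => 0 <= Xpos w i) (iota 0 (size w)) && (Xpos w (size w) == -1).

Definition Hcount (n1 : nat) (w : seq bool) : nat :=
  count (fun i => (Xpos w i < n1%:Z - 2) && (Xpos w i < Xpos w i.-1))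
        (iota 1 (size w)).

(* Conditional probability of the path w given omega starts with SS:
   q per up-step, p per down-step (= p (pq)^{|w'|} for w = w'H). *)
Definition path_weight {R : ringType} (p q : R) (w : seq bool) : R :=
  p ^+ count negb w * q ^+ count idfun w.

(* Contribution to E[H | SS...] of the paths of length m. *)
Definition H_term {R : ringType} (p q : R) (n1 : nat) (m : nat) : R :=
  \sum_(t : m.-tuple bool | first_passage t)
     path_weight p q t * (Hcount n1 t)%:R.

From HB Require Import structures.
From mathcomp Require Import all_boot all_order all_algebra.
From mathcomp Require Import all_classical all_reals all_analysis.
From mathcomp Require Import zify ring lra.
Set Implicit Arguments. Unset Strict Implicit. Unset Printing Implicit Defensive.
Import Order.TTheory GRing.Theory Num.Theory.
Import numFieldNormedType.Exports.
Local Open Scope classical_set_scope.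
Local Open Scope ring_scope.

(* Write level b = X + 1.  Splitting on the first step, the probability of
   ending a cycle within N steps from level b and the expectation of H
   restricted to such cycles obey the one-step recurrences of the walk, while
   E(b) = sum_(j < b) p/(p-q) (1 - (q/p)^(n1-1-j)) solves the recurrence of the
   full expectation, E(b+1) = q E(b+2) + p (E(b) + [b+1 < n1]).  The gaps
   between the partial and the limiting quantities therefore satisfy the
   walk's recurrence with a nonnegative forcing term; this keeps them
   nonnegative, and comparison with a Lyapunov function s^b makes them decay
   geometrically in N.  Hence the series converges to E(1). *)


Section TupleSums.
Variables (R : nmodType) (T : finType).

Lemma big_tuple0 (F : 0.-tuple T -> R) : \sum_(t : 0.-tuple T) F t = F [tuple].
Proof. by rewrite (big_pred1 [tuple]) // => t; apply/esym/eqP/tuple0. Qed.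

Lemma big_tuple_cons m (F : m.+1.-tuple T -> R) :
  \sum_(t : m.+1.-tuple T) F t = \sum_(x : T) \sum_(t : m.-tuple T) F [tuple of x :: t].
Proof.
rewrite pair_big (reindex (fun xt : T * m.-tuple T => [tuple of xt.1 :: xt.2])) //=.
exists (fun t : m.+1.-tuple T => (thead t, [tuple of behead t])).
  by case=> x t _ /=; congr pair; apply: val_inj.
by move=> t _; apply: val_inj; rewrite /= [in RHS](tuple_eta t).
Qed.

End TupleSums.

Definition step (x : bool) : int := if x then 1 else -1.

Lemma Xpos0 w : Xpos w 0 = 0.
Proof. by rewrite /Xpos big_ord0. Qed.

Lemma Xpos_cons x w i : Xpos (x :: w) i.+1 = step x + Xpos w i.
Proof. by rewrite /Xpos big_ord_recl. Qed.

Definition first_passage_from (a : int) (w : seq bool) : bool :=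
  all (fun i => 0 <= a + Xpos w i) (iota 0 (size w)) && (a + Xpos w (size w) == -1).

Lemma first_passage_from0 : first_passage_from 0 =1 first_passage.
Proof.
by move=> w; rewrite /first_passage_from add0r; under eq_all do rewrite add0r.
Qed.

Lemma first_passage_from_nil a : first_passage_from a [::] = (a == -1).
Proof. by rewrite /first_passage_from /= Xpos0 addr0. Qed.

Lemma first_passage_from_cons a x w :
  first_passage_from a (x :: w) = (0 <= a) && first_passage_from (a + step x) w.
Proof.
rewrite /first_passage_from /= Xpos0 addr0 Xpos_cons addrA -andbA.
congr (_ && (_ && _)); rewrite -(addn0 1%N) iotaDl all_map.
by apply: eq_all => i /=; rewrite add1n Xpos_cons addrA.
Qed.

(* Heights are shifted by one so that they live in nat: level b is X = b - 1,
   and the cycle ends on first reaching level 0. *)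
Fixpoint first_hit0 (b : nat) (w : seq bool) : bool :=
  if w is x :: w' then (b != 0%N) && first_hit0 (if x then b.+1 else b.-1) w'
  else b == 0%N.

Lemma first_passage_fromE b w : first_passage_from (b%:Z - 1) w = first_hit0 b w.
Proof.
elim: w b => [|x w IH] [|b] /=; rewrite ?first_passage_from_nil ?first_passage_from_cons //.
have -> : 0 <= b.+1%:Z - 1 by lia.
by rewrite -IH; congr first_passage_from; rewrite /step; case: x; lia.
Qed.

Section LowDownSteps.
Variable n1 : nat.

Definition Hcount_from (a : int) (w : seq bool) : nat :=
  count (fun i => (a + Xpos w i < n1%:Z - 2) && (Xpos w i < Xpos w i.-1))
        (iota 1 (size w)).

Lemma Hcount_from0 : Hcount_from 0 =1 Hcount n1.
Proof. by move=> w; rewrite /Hcount_from; under eq_count do rewrite add0r. Qed.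

Lemma Hcount_from_cons a x w : Hcount_from a (x :: w) =
  addn ((a + step x < n1%:Z - 2) && (step x < 0)) (Hcount_from (a + step x) w).
Proof.
rewrite /Hcount_from /= Xpos_cons !Xpos0 addr0; congr (_ + _)%N.
rewrite (iotaDl 1 1) count_map; apply: eq_in_count => i /=.
rewrite mem_iota => /andP[i_gt0 _].
by rewrite add1n Xpos_cons -(prednK i_gt0) Xpos_cons ltrD2l addrA.
Qed.

(* A down-step from level b lands at X = b - 2, below n1 - 2 iff b < n1. *)
Fixpoint low_downs (b : nat) (w : seq bool) : nat :=
  if w is x :: w' then ((~~ x && (b < n1)%N) + low_downs (if x then b.+1 else b.-1) w')%N
  else 0%N.

Lemma Hcount_fromE b w : first_hit0 b w -> Hcount_from (b%:Z - 1) w = low_downs b w.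
Proof.
elim: w b => [|x w IH] [|b] //= /IH <-; rewrite Hcount_from_cons.
congr (_ + Hcount_from _ _)%N; rewrite /step; case: x => /=; lia.
Qed.

End LowDownSteps.

Section FirstPassageSums.
Variables (R : comRingType) (p q : R) (n1 : nat).

Lemma path_weight_cons x w :
  path_weight p q (x :: w) = (if x then q else p) * path_weight p q w.
Proof. by rewrite /path_weight; case: x; rewrite /= ?add0n ?add1n !exprS; ring. Qed.

Definition hit_prob (m b : nat) : R :=
  \sum_(t : m.-tuple bool) if first_hit0 b t then path_weight p q t else 0.

Definition hit_reward (m b : nat) : R :=
  \sum_(t : m.-tuple bool)
    if first_hit0 b t then path_weight p q t * (low_downs n1 b t)%:R else 0.

Lemma H_termE m : H_term p q n1 m = hit_reward m 1.
Proof.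
rewrite /H_term /hit_reward big_mkcond; apply: eq_bigr => t _.
rewrite -first_passage_from0 -[0]/(1%:Z - 1) first_passage_fromE.
by case: ifP => // hit; rewrite -Hcount_from0 -[0]/(1%:Z - 1) Hcount_fromE.
Qed.

Lemma hit_prob0 b : hit_prob 0 b = (b == 0%N)%:R.
Proof. by rewrite /hit_prob big_tuple0 /path_weight /=; case: eqP; rewrite ?mulr1. Qed.

Lemma hit_probS0 m : hit_prob m.+1 0 = 0.
Proof. by rewrite /hit_prob big_tuple_cons big1 // => x _; rewrite big1. Qed.

Lemma hit_probSS m b : hit_prob m.+1 b.+1 = q * hit_prob m b.+2 + p * hit_prob m b.
Proof.
rewrite /hit_prob big_tuple_cons big_bool !mulr_sumr /=.
by congr (_ + _); apply: eq_bigr => t _; case: ifP; rewrite ?mulr0 ?path_weight_cons.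
Qed.

Lemma hit_reward0 b : hit_reward 0 b = 0.
Proof. by rewrite /hit_reward big_tuple0 /= mulr0; case: ifP. Qed.

Lemma hit_rewardS0 m : hit_reward m.+1 0 = 0.
Proof. by rewrite /hit_reward big_tuple_cons big1 // => x _; rewrite big1. Qed.

Lemma hit_rewardSS m b : hit_reward m.+1 b.+1 =
  q * hit_reward m b.+2 + p * (hit_reward m b + (b.+1 < n1)%N%:R * hit_prob m b).
Proof.
rewrite /hit_reward /hit_prob big_tuple_cons big_bool -big_split /=.
rewrite [_%:R * _]mulr_sumr -big_split !mulr_sumr -big_split /=.
apply: eq_bigr => t _; rewrite !path_weight_cons add0n natrD.
by do 2 case: ifP => _; ring.
Qed.

Definition cum_prob (N b : nat) : R := \sum_(0 <= k < N) hit_prob k b.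
Definition cum_reward (N b : nat) : R := \sum_(0 <= k < N) hit_reward k b.

Lemma cum_prob0 b : cum_prob 0 b = 0.
Proof. by rewrite /cum_prob big_geq. Qed.

Lemma cum_probS0 N : cum_prob N.+1 0 = 1.
Proof.
by rewrite /cum_prob big_nat_recl // hit_prob0 big1 ?addr0 // => k _; rewrite hit_probS0.
Qed.

Lemma cum_probSS N b : cum_prob N.+1 b.+1 = q * cum_prob N b.+2 + p * cum_prob N b.
Proof.
rewrite /cum_prob big_nat_recl // hit_prob0 add0r !mulr_sumr -big_split.
by apply: eq_bigr => k _; rewrite hit_probSS.
Qed.

Lemma cum_reward0 b : cum_reward 0 b = 0.
Proof. by rewrite /cum_reward big_geq. Qed.

Lemma cum_rewardS0 N : cum_reward N.+1 0 = 0.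
Proof.
by rewrite /cum_reward big_nat_recl // hit_reward0 big1 ?addr0 // => k _; rewrite hit_rewardS0.
Qed.

Lemma cum_rewardSS N b : cum_reward N.+1 b.+1 =
  q * cum_reward N b.+2 + p * (cum_reward N b + (b.+1 < n1)%N%:R * cum_prob N b).
Proof.
rewrite /cum_reward /cum_prob big_nat_recl // hit_reward0 add0r.
rewrite [_%:R * _]mulr_sumr -big_split !mulr_sumr -big_split /=.
by apply: eq_bigr => k _; rewrite hit_rewardSS.
Qed.

End FirstPassageSums.

Section WalkGapBounds.
Variables (R : realFieldType) (p q : R) (D e : nat -> nat -> R).
Hypotheses (p_ge0 : 0 <= p) (q_ge0 : 0 <= q).
Hypothesis D_S0 : forall N, D N.+1 0 = 0.
Hypothesis D_SS : forall N b, D N.+1 b.+1 = q * D N b.+2 + p * D N b + e N b.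

Lemma walk_gap_ge0 :
  (forall b, 0 <= D 0 b) -> (forall N b, 0 <= e N b) -> forall N b, 0 <= D N b.
Proof.
move=> D0_ge0 e_ge0; elim=> [|N IH] [|b] //; rewrite ?D_S0 ?D_SS //.
by rewrite !addr_ge0 ?mulr_ge0.
Qed.

Variables (s rho : R).
Hypotheses (s_ge1 : 1 <= s) (rho_ge0 : 0 <= rho) (rho_s : rho * s = q * s ^+ 2 + p).

Lemma walk_gap_decay (K E t : R) :
  0 <= K -> rho <= t -> E <= K * (t - rho) ->
  (forall b, D 0 b <= K * s ^+ b) -> (forall N b, e N b <= E * rho ^+ N * s ^+ b) ->
  forall N b, D N b <= K * t ^+ N * s ^+ b.
Proof.
move=> K_ge0 rho_le_t E_le D0_le e_le.
have t_ge0 : 0 <= t := le_trans rho_ge0 rho_le_t.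
have s_ge0 : 0 <= s := le_trans ler01 s_ge1.
have Kt_ge0 : 0 <= K * (t - rho) by rewrite mulr_ge0 // subr_ge0.
elim=> [|N IH] b; first by rewrite expr0 mulr1.
case: b => [|b]; first by rewrite D_S0 !mulr_ge0 ?exprn_ge0.
have e_bound : e N b <= K * (t - rho) * (t ^+ N * s ^+ b.+1).
  apply: le_trans (e_le N b) _; rewrite -mulrA.
  apply: le_trans (ler_wpM2r _ E_le) (ler_wpM2l Kt_ge0 _).
    by rewrite mulr_ge0 ?exprn_ge0.
  by rewrite ler_pM ?exprn_ge0 ?lerXn2r ?nnegrE // exprS ler_peMl ?exprn_ge0.
have -> : K * t ^+ N.+1 * s ^+ b.+1 = q * (K * t ^+ N * s ^+ b.+2) +
    p * (K * t ^+ N * s ^+ b) + K * (t - rho) * (t ^+ N * s ^+ b.+1).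
  have -> : p = rho * s - q * s ^+ 2 by rewrite rho_s addrAC subrr add0r.
  by rewrite !exprS; ring.
by rewrite D_SS !lerD // ler_wpM2l.
Qed.

End WalkGapBounds.

Section ExpectedHCount.
Variables (R : realType) (p q : R) (n1 : nat).
Hypotheses (q_gt0 : 0 < q) (q_lt_p : q < p) (pq1 : p + q = 1).

Let p_gt0 : 0 < p. Proof. exact: lt_trans q_lt_p. Qed.
Let pBq_gt0 : 0 < p - q. Proof. by rewrite subr_gt0. Qed.
Let ppBq_ge0 : 0 <= p / (p - q). Proof. by rewrite divr_ge0 ?ltW. Qed.
Let qp_ge0 : 0 <= q / p. Proof. by rewrite divr_ge0 ?ltW. Qed.
Let qp_le1 : q / p <= 1. Proof. by rewrite ler_pdivrMr // mul1r ltW. Qed.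

(* Truncated subtraction makes the increments vanish from level n1 - 1 on. *)
Definition expected_H_incr (j : nat) : R := p / (p - q) * (1 - (q / p) ^+ (n1.-1 - j)).
Definition expected_H (b : nat) : R := \sum_(j < b) expected_H_incr j.

Lemma expected_H_incr_ge0 j : 0 <= expected_H_incr j.
Proof. by rewrite mulr_ge0 // subr_ge0 exprn_ile1. Qed.

Lemma expected_H_incr_le j : expected_H_incr j <= p / (p - q).
Proof. by rewrite ler_piMr // lerBlDr lerDl exprn_ge0. Qed.

Lemma expected_H_ge0 b : 0 <= expected_H b.
Proof. by rewrite sumr_ge0 // => j _; apply: expected_H_incr_ge0. Qed.

Lemma expected_HS b : expected_H b.+1 = expected_H b + expected_H_incr b.
Proof. by rewrite /expected_H big_ord_recr. Qed.

Lemma expected_H_le b : expected_H b <= (minn b n1.-1)%:R * (p / (p - q)).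
Proof.
elim: b => [|b IH]; first by rewrite /expected_H big_ord0 min0n mul0r.
rewrite expected_HS; case: (ltnP b n1.-1) => [b_lt | b_ge].
  rewrite (_ : minn b.+1 n1.-1 = (minn b n1.-1).+1); last by lia.
  by rewrite mulrSr mulrDl mul1r lerD // expected_H_incr_le.
rewrite (_ : minn b.+1 n1.-1 = minn b n1.-1); last by lia.
by rewrite /expected_H_incr (_ : n1.-1 - b = 0)%N ?subrr ?mulr0 ?addr0 //; lia.
Qed.

Lemma expected_H_incr_rec b :
  p * expected_H_incr b = q * expected_H_incr b.+1 + p * (b.+1 < n1)%N%:R.
Proof.
rewrite /expected_H_incr; case: (ltnP b.+1 n1) => [b_lt | b_ge].
  rewrite (_ : n1.-1 - b = (n1.-1 - b.+1).+1)%N; last by lia.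
  by rewrite exprS mulr1n; field; rewrite !lt0r_neq0.
rewrite (_ : n1.-1 - b = 0)%N; last by lia.
by rewrite (_ : n1.-1 - b.+1 = 0)%N; [rewrite subrr !mulr0 addr0 | lia].
Qed.

Lemma expected_H_rec b :
  expected_H b.+1 = q * expected_H b.+2 + p * (expected_H b + (b.+1 < n1)%N%:R).
Proof.
rewrite !expected_HS -[LHS]mul1r -{1}pq1.
transitivity (p * expected_H b + q * (expected_H b + expected_H_incr b) +
              p * expected_H_incr b); first ring.
by rewrite expected_H_incr_rec; ring.
Qed.

(* s^b is a Lyapunov function of the walk: with s = 1/(2q) one step of the
   walk multiplies it on average by rho = q s + p / s = 1/2 + 2pq, which is
   < 1 because 4pq < (p + q)^2 when p <> q. *)
Let s : R := (2 * q)^-1.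
Let rho : R := 2^-1 + 2 * p * q.

Let s_ge1 : 1 <= s.
Proof. by rewrite invf_ge1 ?mulr_gt0 //; move: q_lt_p pq1; lra. Qed.

Let rho_ge0 : 0 <= rho.
Proof. by rewrite addr_ge0 // !mulr_ge0 // ltW. Qed.

Let rho_lt1 : rho < 1.
Proof.
have : 0 < (p - q) ^+ 2 by rewrite exprn_gt0.
by rewrite /rho expr2; move: pq1; nra.
Qed.

Let rho_s : rho * s = q * s ^+ 2 + p.
Proof. by rewrite /rho /s expr2; field; rewrite lt0r_neq0. Qed.

Let cum_prob_gap_S0 N : 1 - cum_prob p q N.+1 0 = 0.
Proof. by rewrite cum_probS0 subrr. Qed.

Let cum_prob_gap_SS N b : 1 - cum_prob p q N.+1 b.+1 =
  q * (1 - cum_prob p q N b.+2) + p * (1 - cum_prob p q N b) + 0.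
Proof. by rewrite cum_probSS -{1}pq1; ring. Qed.

Lemma cum_prob_le1 N b : cum_prob p q N b <= 1.
Proof.
rewrite -subr_ge0.
apply: (walk_gap_ge0 (ltW p_gt0) (ltW q_gt0) cum_prob_gap_S0 cum_prob_gap_SS) => // b'.
by rewrite cum_prob0 subr0.
Qed.

Lemma cum_prob_tail N b : 1 - cum_prob p q N b <= rho ^+ N * s ^+ b.
Proof.
rewrite -[rho ^+ N]mul1r.
apply: (walk_gap_decay (ltW p_gt0) (ltW q_gt0) cum_prob_gap_S0 cum_prob_gap_SS
                       s_ge1 rho_ge0 rho_s (E := 0)) => //.
- by rewrite subrr mulr0.
- by move=> b'; rewrite cum_prob0 subr0 mul1r exprn_ege1.
- by move=> *; rewrite !mul0r.
Qed.

Let reward_gap_S0 N : expected_H 0 - cum_reward p q n1 N.+1 0 = 0.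
Proof. by rewrite cum_rewardS0 /expected_H big_ord0 subrr. Qed.

Let reward_gap_SS N b : expected_H b.+1 - cum_reward p q n1 N.+1 b.+1 =
  q * (expected_H b.+2 - cum_reward p q n1 N b.+2) +
  p * (expected_H b - cum_reward p q n1 N b) +
  p * (b.+1 < n1)%N%:R * (1 - cum_prob p q N b).
Proof. by rewrite expected_H_rec cum_rewardSS; ring. Qed.

Lemma cum_reward_le N b : cum_reward p q n1 N b <= expected_H b.
Proof.
rewrite -subr_ge0.
apply: (walk_gap_ge0 (ltW p_gt0) (ltW q_gt0) reward_gap_S0 reward_gap_SS) => [b'|N' b'].
  by rewrite cum_reward0 subr0 expected_H_ge0.
by rewrite !mulr_ge0 ?ler0n ?subr_ge0 ?cum_prob_le1 // ltW.
Qed.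

Let sig : R := (1 + rho) / 2.
Let K : R := n1%:R * (p / (p - q)) + p / (sig - rho).

Let rho_lt_sig : rho < sig. Proof. by rewrite /sig; move: rho_lt1; lra. Qed.
Let sig_lt1 : sig < 1. Proof. by rewrite /sig; move: rho_lt1; lra. Qed.
Let sigBrho_gt0 : 0 < sig - rho. Proof. by rewrite subr_gt0. Qed.
Let n1pq_ge0 : 0 <= n1%:R * (p / (p - q)). Proof. exact: mulr_ge0. Qed.
Let K_ge0 : 0 <= K. Proof. by rewrite addr_ge0 // divr_ge0 // ltW. Qed.

Lemma cum_reward_tail N b :
  expected_H b - cum_reward p q n1 N b <= K * sig ^+ N * s ^+ b.
Proof.
apply: (walk_gap_decay (ltW p_gt0) (ltW q_gt0) reward_gap_S0 reward_gap_SS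
                       s_ge1 rho_ge0 rho_s (E := p)) => //.
- exact: ltW.
- by rewrite mulrDl divfK ?gt_eqF // lerDr (mulr_ge0 n1pq_ge0 (ltW sigBrho_gt0)).
- move=> b'; rewrite cum_reward0 subr0; apply: le_trans (expected_H_le b') _.
  apply: le_trans (_ : _ <= K) (ler_peMr K_ge0 (exprn_ege1 _ s_ge1)).
  apply: ler_wpDr; first exact: divr_ge0 (ltW p_gt0) (ltW sigBrho_gt0).
  by rewrite ler_wpM2r // ler_nat geq_min leq_pred orbT.
- move=> N' b'; rewrite -!mulrA; apply: ler_wpM2l; first exact: ltW.
  apply: le_trans _ (cum_prob_tail N' b').
  by rewrite ler_piMl ?subr_ge0 ?cum_prob_le1 // lern1 leq_b1.
Qed.

Lemma cum_reward_cvg b : cum_reward p q n1 N b @[N --> \oo] --> expected_H b.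
Proof.
apply/subr_cvg0; rewrite -oppr0; under eq_fun do rewrite -opprB.
apply: cvgN; apply: (@squeeze_cvgr _ _ _ _ (cst 0) (geometric (K * s ^+ b) sig)).
- by near=> N; rewrite /= subr_ge0 cum_reward_le mulrAC cum_reward_tail.
- exact: cvg_cst.
- by apply: cvg_geometric; rewrite ger0_norm // (le_trans rho_ge0) // ltW.
Unshelve. all: by end_near.
Qed.

End ExpectedHCount.

Theorem proposition6 (R : realType) (p q : R) (n1 : nat)
  (hq : 0 < q) (hqp : q < p) (hpq : p + q = 1) (hn1 : (2 <= n1)%N) :
  series (H_term p q n1) @ \oo -->
    p / (p - q) * (1 - (q / p) ^+ (n1.-1)).
Proof.
(* The formula also holds for n1 < 2. *)
have -> : series (H_term p q n1) = cum_reward p q n1 ^~ 1%N.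
  by apply/funext => N; apply: eq_bigr => m _; rewrite H_termE.
have -> : p / (p - q) * (1 - (q / p) ^+ n1.-1) = expected_H p q n1 1.
  by rewrite /expected_H big_ord1 /expected_H_incr subn0.
exact: cum_reward_cvg.
Qed.
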